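(* Let $R$ be a commutative ring. The following are equivalent: (i) $R$ is a p.p. ring; (ii) $R$ is a p.f. ring and $T(R)$ is an absolutely flat ring; (iii) $T(R)$ is an absolutely flat ring and the idempotents of $R$ can be lifted along each localization of $R$, i.e. for every multiplicative subset $S\subseteq R$ and every idempotent $x\in S^{-1}R$ there is an idempotent $e\in R$ with $e/1=x$; (iv) $T(R)$ is an absolutely flat ring and for every idempotent $x\in T(R)$ there is an idempotent $e\in R$ with $e/1=x$.
   Context: All rings are commutative with identity. A ring $R$ is a p.p. ring if every principal ideal of $R$ is a projective $R$-module; it is a p.f. ring if every principal ideal of $R$ is a flat $R$-module. $Z(R)=\{f\in R:\operatorname{Ann}(f)\neq 0\}$ is the set of zero-divisors and $T(R)=S^{-1}R$ with $S=R\setminus Z(R)$ is the total ring of fractions. A ring is absolutely flat if every module over it is flat (equivalently, von Neumann regular). *)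

From HB Require Import structures.
From mathcomp Require Import all_boot all_order all_algebra.

Set Implicit Arguments.
Unset Strict Implicit.
Unset Printing Implicit Defensive.

Import GRing.Theory.
Local Open Scope ring_scope.

(* Commutative rings with identity (the zero ring is allowed): comPzRingType.
   Subsets of R (ideals, multiplicative subsets) are Prop-valued predicates. *)

Section Defs.
Variable R : comPzRingType.

Definition principal_ideal (f : R) : R -> Prop := fun x => exists r : R, x = r * f.

Definition is_linear_map (M N : lmodType R) (g : M -> N) : Prop :=
  forall (r : R) (x y : M), g (r *: x + y) = r *: g x + g y.

(* A map h : R -> N whose restriction to the submodule I of R is R-linear;
   this represents an element of Hom_R(I, N). *)
Definition lin_on (N : lmodType R) (I : R -> Prop) (h : R -> N) : Prop :=
  forall (r x y : R), I x -> I y -> h (r * x + y) = r *: h x + h y.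

Definition projective_ideal (I : R -> Prop) : Prop :=
  forall (M N : lmodType R) (g : M -> N), is_linear_map g ->
    (forall n : N, exists m : M, g m = n) ->
  forall h : R -> N, lin_on I h ->
    exists k : R -> M, lin_on I k /\ (forall x, I x -> g (k x) = h x).

Definition bilin_on (I : R -> Prop) (M P : lmodType R) (b : R -> M -> P) : Prop :=
  (forall (r x y : R) (m : M), I x -> I y -> b (r * x + y) m = r *: b x m + b y m) /\
  (forall (r x : R) (m n : M), I x -> b x (r *: m + n) = r *: b x m + b x n).

(* The element  sum_i x_i (x) m_i  of the tensor product I (x)_R M (with all
   x_i in I) is zero: by the universal property of I (x)_R M, this means it is
   killed by every R-bilinear map out of I x M. *)
Definition tensor_zero (I : R -> Prop) (M : lmodType R) (s : seq (R * M)) : Prop :=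
  forall (P : lmodType R) (b : R -> M -> P), bilin_on I b ->
    \sum_(p <- s) b p.1 p.2 = 0.

(* The ideal I is a flat R-module: I (x)_R - preserves injective maps. *)
Definition flat_ideal (I : R -> Prop) : Prop :=
  forall (M N : lmodType R) (u : M -> N), is_linear_map u -> injective u ->
  forall s : seq (R * M), (forall p, p \in s -> I p.1) ->
    tensor_zero I [seq (p.1, u p.2) | p <- s] -> tensor_zero I s.

Definition pp_ring : Prop := forall f : R, projective_ideal (principal_ideal f).

Definition pf_ring : Prop := forall f : R, flat_ideal (principal_ideal f).

Definition multiplicative (S : R -> Prop) : Prop :=
  S 1 /\ (forall s t, S s -> S t -> S (s * t)).

Definition nonzerodiv (f : R) : Prop := forall g : R, f * g = 0 -> g = 0.

(* Equality of fractions a/s = b/t in S^{-1}R (s, t in S). *)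
Definition frac_eq (S : R -> Prop) (a s b t : R) : Prop :=
  exists u : R, S u /\ u * (a * t - b * s) = 0.

(* S^{-1}R is absolutely flat, i.e. von Neumann regular:
   every x in S^{-1}R has y with x^2 y = x. *)
Definition loc_absolutely_flat (S : R -> Prop) : Prop :=
  forall a s : R, S s ->
    exists b t : R, S t /\ frac_eq S (a * a * b) (s * s * t) a s.

Definition lifts_idempotents (S : R -> Prop) : Prop :=
  forall a s : R, S s -> frac_eq S (a * a) (s * s) a s ->
    exists e : R, e * e = e /\ frac_eq S e 1 a s.

End Defs.

From Pilot Require Import Defs.
From HB Require Import structures.
From mathcomp Require Import all_boot all_order all_algebra ring.
From Stdlib Require Import ClassicalEpsilon FunctionalExtensionality PropExtensionality.

(* The principal ideal fR ~ R/Ann(f) is projective exactly when Ann(f) = (1 - e)R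
   for an idempotent e with ef = f, the support idempotent of f; each condition
   of the theorem is a way of producing these idempotents.  Flatness of fR makes
   Ann(f) pure: if fy = 0 there is h in Ann(f) with yh = y.  Absolute flatness of
   T(R) gives, for each f, some b and a non-zero-divisor t with f^2 b = f t, so
   that fb/t is idempotent in T(R); the support idempotent of f is then either a
   lift e of fb/t, or 1 - h with h obtained from purity for y = t - fb.
   Conversely, if e is the support idempotent of a, then a + 1 - e is a
   non-zero-divisor and a/s has quasi-inverse se/(a + 1 - e) in T(R); and an
   idempotent a/s of S^-1 R, with u(a^2 s - a s^2) = 0 for some u in S, lifts to
   the support idempotent of usa. *)

Set Implicit Arguments.
Unset Strict Implicit.
Unset Printing Implicit Defensive.

Import GRing.Theory.
Local Open Scope ring_scope.

Record ideal (R : comPzRingType) := Ideal {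
  ideal_mem :> R -> Prop;
  ideal0 : ideal_mem 0;
  idealD : forall x y, ideal_mem x -> ideal_mem y -> ideal_mem (x + y);
  idealMl : forall r x, ideal_mem x -> ideal_mem (r * x) }.

Section Ideals.
Variable R : comPzRingType.

Lemma ann_closedD (f x y : R) : f * x = 0 -> f * y = 0 -> f * (x + y) = 0.
Proof. by move=> fx fy; rewrite mulrDr fx fy addr0. Qed.

Lemma ann_closedM (f r x : R) : f * x = 0 -> f * (r * x) = 0.
Proof. by move=> fx; rewrite mulrCA fx mulr0. Qed.

Lemma idealN (J : ideal R) x : J x -> J (- x).
Proof. by rewrite -mulN1r; apply: idealMl. Qed.

Definition ann_ideal (f : R) : ideal R :=
  @Ideal R (fun x => f * x = 0) (mulr0 f) (@ann_closedD f) (@ann_closedM f).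

Section IdealAdd.
Variables I J : ideal R.

Definition ideal_add_mem (x : R) : Prop := exists a c, [/\ x = a + c, I a & J c].

Lemma ideal_add_closed0 : ideal_add_mem 0.
Proof. by exists 0, 0; rewrite addr0; split => //; apply: ideal0. Qed.

Lemma ideal_add_closedD x y : ideal_add_mem x -> ideal_add_mem y -> ideal_add_mem (x + y).
Proof.
move=> [a [c [-> Ia Jc]]] [a' [c' [-> Ia' Jc']]].
by exists (a + a'), (c + c'); split; [ring | apply: idealD..].
Qed.

Lemma ideal_add_closedM r x : ideal_add_mem x -> ideal_add_mem (r * x).
Proof.
move=> [a [c [-> Ia Jc]]].
by exists (r * a), (r * c); split; [ring | apply: idealMl..].
Qed.

Definition ideal_add : ideal R :=
  Ideal ideal_add_closed0 ideal_add_closedD ideal_add_closedM.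

Lemma ideal_addl x : I x -> ideal_add x.
Proof. by move=> Ix; exists x, 0; rewrite addr0; split => //; apply: ideal0. Qed.

Lemma ideal_addr x : J x -> ideal_add x.
Proof. by move=> Jx; exists 0, x; rewrite add0r; split => //; apply: ideal0. Qed.

End IdealAdd.
End Ideals.

Section QuotientModule.
Variables (R : comPzRingType) (J : ideal R).

(* R/J is carried by canonical representatives, so that equality in it is
   Leibniz equality, as lmodType requires. *)
Definition qrep (x : R) : R := epsilon (inhabits 0) (fun y => J (x - y)).

Lemma qrepP x : J (x - qrep x).
Proof.
apply: (epsilon_spec (inhabits 0) (fun y => J (x - y))).
by exists x; rewrite subrr; apply: ideal0.
Qed.

Lemma qrep_eq x y : J (x - y) -> qrep x = qrep y.
Proof.
move=> Jxy; rewrite /qrep; congr (epsilon _); apply: functional_extensionality => z.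
apply: propositional_extensionality; split=> Jz.
- have -> : y - z = x - z + - (x - y) by ring.
  exact: idealD Jz (idealN Jxy).
- have -> : x - z = (x - y) + (y - z) by ring.
  exact: idealD Jxy Jz.
Qed.

Lemma qrep_idem x : qrep (qrep x) == qrep x.
Proof. by apply/eqP/qrep_eq; rewrite -opprB; apply/idealN/qrepP. Qed.

Definition quot_mod := {x : R | qrep x == x}.
HB.instance Definition _ := Choice.on quot_mod.

Definition qproj (x : R) : quot_mod := exist _ (qrep x) (qrep_idem x).

Lemma qprojK (q : quot_mod) : qproj (val q) = q.
Proof. by apply: val_inj => /=; apply/eqP; case: q. Qed.

Lemma quot_mod_ind (P : quot_mod -> Prop) : (forall x, P (qproj x)) -> forall q, P q.
Proof. by move=> Px q; rewrite -(qprojK q). Qed.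

Lemma qproj_eqP x y : qproj x = qproj y <-> J (x - y).
Proof.
split=> [/(congr1 val) /= eq_xy | Jxy]; last exact/val_inj/qrep_eq.
have -> : x - y = (x - qrep x) + - (y - qrep y) by rewrite eq_xy; ring.
exact: idealD (qrepP x) (idealN (qrepP y)).
Qed.

Definition qadd (a b : quot_mod) := qproj (val a + val b).
Definition qopp (a : quot_mod) := qproj (- val a).
Definition qscale (r : R) (a : quot_mod) := qproj (r * val a).

Lemma qaddE x y : qadd (qproj x) (qproj y) = qproj (x + y).
Proof.
apply/qproj_eqP => /=.
have -> : qrep x + qrep y - (x + y) = - ((x - qrep x) + (y - qrep y)) by ring.
exact: idealN (idealD (qrepP x) (qrepP y)).
Qed.

Lemma qoppE x : qopp (qproj x) = qproj (- x).
Proof.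
apply/qproj_eqP => /=.
have -> : - qrep x - - x = x - qrep x by ring.
exact: qrepP.
Qed.

Lemma qscaleE r x : qscale r (qproj x) = qproj (r * x).
Proof.
apply/qproj_eqP => /=.
have -> : r * qrep x - r * x = - (r * (x - qrep x)) by ring.
exact: idealN (idealMl r (qrepP x)).
Qed.

Lemma qaddA : associative qadd.
Proof. by do 3!elim/quot_mod_ind=> ?; rewrite !qaddE addrA. Qed.

Lemma qaddC : commutative qadd.
Proof. by do 2!elim/quot_mod_ind=> ?; rewrite !qaddE addrC. Qed.

Lemma qadd0 : left_id (qproj 0) qadd.
Proof. by elim/quot_mod_ind=> x; rewrite qaddE add0r. Qed.

Lemma qaddN : left_inverse (qproj 0) qopp qadd.
Proof. by elim/quot_mod_ind=> x; rewrite qoppE qaddE addNr. Qed.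

HB.instance Definition _ := GRing.isZmodule.Build quot_mod qaddA qaddC qadd0 qaddN.

Lemma qscaleA a b (v : quot_mod) : qscale a (qscale b v) = qscale (a * b) v.
Proof. by elim/quot_mod_ind: v => x; rewrite !qscaleE mulrA. Qed.

Lemma qscale1 : left_id 1 qscale.
Proof. by elim/quot_mod_ind=> x; rewrite qscaleE mul1r. Qed.

Lemma qscaleDr : right_distributive qscale qadd.
Proof.
by move=> r; do 2!elim/quot_mod_ind=> ?; rewrite qaddE !qscaleE qaddE mulrDr.
Qed.

Lemma qscaleDl (v : quot_mod) : {morph qscale^~ v : a b / a + b >-> qadd a b}.
Proof.
by elim/quot_mod_ind: v => x a b; rewrite !qscaleE qaddE mulrDl.
Qed.

HB.instance Definition _ :=
  GRing.Zmodule_isLmodule.Build R quot_mod qscaleA qscale1 qscaleDr qscaleDl.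

Lemma qprojD x y : qproj x + qproj y = qproj (x + y).
Proof. exact: qaddE. Qed.

Lemma qprojZ r x : r *: qproj x = qproj (r * x).
Proof. exact: qscaleE. Qed.

Lemma qproj0 : qproj 0 = 0.
Proof. by []. Qed.

Lemma qproj_linear : is_linear_map (qproj : R^o -> quot_mod).
Proof. by move=> r x y; rewrite qprojZ qprojD. Qed.

End QuotientModule.

Section LinearMaps.
Variable R : comPzRingType.
Implicit Types (M N P : lmodType R) (I : R -> Prop).

Lemma linmap0 M N (g : M -> N) : is_linear_map g -> g 0 = 0.
Proof. by move=> lin_g; have := lin_g (-1) 0 0; rewrite scaler0 addr0 scaleN1r addNr. Qed.

Lemma linmapZ M N (g : M -> N) r m : is_linear_map g -> g (r *: m) = r *: g m.
Proof. by move=> lin_g; have := lin_g r m 0; rewrite !addr0 (linmap0 lin_g) addr0. Qed.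

Lemma linmapD M N (g : M -> N) : is_linear_map g -> {morph g : x y / x + y}.
Proof. by move=> lin_g x y; have := lin_g 1 x y; rewrite !scale1r. Qed.

Lemma linmap_sum M N (g : M -> N) (T : Type) (s : seq T) (F : T -> M) :
  is_linear_map g -> g (\sum_(p <- s) F p) = \sum_(p <- s) g (F p).
Proof. by move=> lin_g; apply: (big_morph g (linmapD lin_g) (linmap0 lin_g)). Qed.

Lemma lin_on0 N I (h : R -> N) : I 0 -> lin_on I h -> h 0 = 0.
Proof.
by move=> I0 lin_h; have := lin_h (-1) 0 0 I0 I0; rewrite mulr0 addr0 scaleN1r addNr.
Qed.

Lemma lin_onZ N I (h : R -> N) r x : I 0 -> I x -> lin_on I h -> h (r * x) = r *: h x.
Proof.
by move=> I0 Ix lin_h; have := lin_h r x 0 Ix I0; rewrite !addr0 (lin_on0 I0 lin_h) addr0.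
Qed.

Section Bilinear.
Variables (I : R -> Prop) (M P : lmodType R) (b : R -> M -> P).
Hypotheses (I0 : I 0) (bil_b : bilin_on I b).

Lemma bilin_on0l m : b 0 m = 0.
Proof.
by have := (proj1 bil_b) (-1) 0 0 m I0 I0; rewrite mulr0 addr0 scaleN1r addNr.
Qed.

Lemma bilin_on0r x : I x -> b x 0 = 0.
Proof.
by move=> Ix; have := (proj2 bil_b) (-1) x 0 0 Ix; rewrite scaler0 addr0 scaleN1r addNr.
Qed.

Lemma bilin_onZl r x m : I x -> b (r * x) m = r *: b x m.
Proof. by move=> Ix; have := (proj1 bil_b) r x 0 m Ix I0; rewrite !addr0 bilin_on0l addr0. Qed.

Lemma bilin_onZr r x m : I x -> b x (r *: m) = r *: b x m.
Proof. by move=> Ix; have := (proj2 bil_b) r x m 0 Ix; rewrite !addr0 bilin_on0r // addr0. Qed.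

End Bilinear.
End LinearMaps.

Section PrincipalIdeals.
Variables (R : comPzRingType) (f : R).

Lemma principal_ideal0 : principal_ideal f 0.
Proof. by exists 0; rewrite mul0r. Qed.

Lemma principal_ideal_id : principal_ideal f f.
Proof. by exists 1; rewrite mul1r. Qed.

Lemma principal_idealMD r x y :
  principal_ideal f x -> principal_ideal f y -> principal_ideal f (r * x + y).
Proof. by move=> [a ->] [c ->]; exists (r * a + c); rewrite mulrDl mulrA. Qed.

(* A coefficient r with x = r f: only determined modulo Ann(f), and arbitrary
   when x is not in fR. *)
Definition pcoef (x : R) : R := epsilon (inhabits 0) (fun r => x = r * f).

Lemma pcoefK x : principal_ideal f x -> pcoef x * f = x.
Proof. by move=> fx; rewrite -(epsilon_spec (inhabits 0) (fun r => x = r * f) fx). Qed.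

Lemma pcoefMD r x y : principal_ideal f x -> principal_ideal f y ->
  f * (pcoef (r * x + y) - (r * pcoef x + pcoef y)) = 0.
Proof.
move=> fx fy; rewrite mulrBr mulrDr mulrCA ![f * pcoef _]mulrC !pcoefK ?subrr //.
exact: principal_idealMD.
Qed.

End PrincipalIdeals.

Section SupportIdempotents.
Variable R : comPzRingType.

Definition support_idempotent (f e : R) : Prop :=
  [/\ e * e = e, e * f = f & forall y, f * y = 0 -> e * y = 0].

Definition has_support_idempotents : Prop :=
  forall f : R, exists e, support_idempotent f e.

Lemma support_idempotent_pcoefMD f e r x y : support_idempotent f e ->
  principal_ideal f x -> principal_ideal f y ->
  pcoef f (r * x + y) * e = r * (pcoef f x * e) + pcoef f y * e.
Proof.
move=> [_ _ ann_e] fx fy; apply/eqP; rewrite -subr_eq0; apply/eqP.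
rewrite -[RHS](ann_e _ (pcoefMD r fx fy)); ring.
Qed.

(* Lift fR ~ R/Ann(f) along R -> R/Ann(f) to k : fR -> R; then c = k f
   satisfies cf = f and Ann(f) c = 0, so c^2 = c^3 and c^2 is the support
   idempotent. *)
Lemma pp_support_idempotent : pp_ring R -> has_support_idempotents.
Proof.
move=> pp f; pose J := ann_ideal f.
have surj_proj (q : quot_mod J) : exists x : R^o, qproj J x = q.
  by exists (val q); apply: qprojK.
have lin_h : lin_on (principal_ideal f) (fun x => qproj J (pcoef f x)).
  by move=> r x y fx fy; rewrite qprojZ qprojD; apply/qproj_eqP/pcoefMD.
have [k [lin_k kP]] := pp f _ _ _ (qproj_linear J) surj_proj _ lin_h.
have fk x : principal_ideal f x -> f * k x = x.
  move=> fx; move/qproj_eqP: (kP x fx) => /eqP; rewrite mulrBr subr_eq0 => /eqP ->.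
  by rewrite mulrC pcoefK.
pose c : R := k f.
have cf : c * f = f by rewrite mulrC fk //; apply: principal_ideal_id.
have ann_c y : f * y = 0 -> y * c = 0.
  move=> fy; have := lin_onZ y (principal_ideal0 f) (principal_ideal_id f) lin_k.
  by rewrite mulrC fy (lin_on0 (principal_ideal0 f) lin_k) => /esym.
have c3 : c * c * c = c * c.
  have : (c - c * c) * c = 0.
    by apply: ann_c; rewrite mulrBr mulrA (mulrC f c) cf (mulrC f c) cf subrr.
  by rewrite mulrBl => /eqP; rewrite subr_eq0 => /eqP <-.
exists (c * c); split.
- by rewrite mulrA !c3.
- by rewrite -mulrA !cf.
- by move=> y fy; rewrite -mulrA [c * y]mulrC ann_c ?mulr0.
Qed.

Lemma support_idempotent_pp : has_support_idempotents -> pp_ring R.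
Proof.
move=> supp f M N g lin_g surj_g h lin_h.
have [e supp_e] := supp f; have [_ ef _] := supp_e.
have [m gm] := surj_g (h f).
exists (fun x => (pcoef f x * e) *: m); split.
  move=> r x y fx fy /=.
  by rewrite (support_idempotent_pcoefMD r supp_e fx fy) scalerDl scalerA.
move=> x fx /=; rewrite linmapZ // gm.
by rewrite -(lin_onZ _ (principal_ideal0 f) (principal_ideal_id f) lin_h) -mulrA ef pcoefK.
Qed.

Lemma pp_ringP : pp_ring R <-> has_support_idempotents.
Proof. by split; [apply: pp_support_idempotent | apply: support_idempotent_pp]. Qed.

End SupportIdempotents.

Section Flatness.
Variable R : comPzRingType.

Lemma bilin_on_principal_sum (f : R) (M P : lmodType R) (b : R -> M -> P) (s : seq (R * M)) :
  bilin_on (principal_ideal f) b -> (forall p, p \in s -> principal_ideal f p.1) ->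
  \sum_(p <- s) b p.1 p.2 = b f (\sum_(p <- s) pcoef f p.1 *: p.2).
Proof.
move=> bil_b; have f0 := principal_ideal0 f; have ff := principal_ideal_id f.
elim: s => [|p s IH] sI; first by rewrite !big_nil (bilin_on0r bil_b ff).
have fp : principal_ideal f p.1 by apply: sI; rewrite inE eqxx.
rewrite !big_cons (proj2 bil_b) // IH => [|q sq]; last by apply: sI; rewrite inE sq orbT.
by rewrite -(bilin_onZl f0 bil_b) // pcoefK.
Qed.

Lemma support_idempotent_pf : has_support_idempotents R -> pf_ring R.
Proof.
move=> supp f M N u lin_u inj_u s sI img0 P b bil_b.
have f0 := principal_ideal0 f; have ff := principal_ideal_id f.
have [e supp_e] := supp f; have [_ ef _] := supp_e.
rewrite (bilin_on_principal_sum bil_b sI); set m := \sum_(p <- s) _.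
have bil_e : bilin_on (principal_ideal f) (fun x (n : N) => (pcoef f x * e) *: n).
  split=> [r x y n fx fy | r x n n' fx].
  - by rewrite (support_idempotent_pcoefMD r supp_e fx fy) scalerDl scalerA.
  - by rewrite scalerDr !scalerA mulrC.
have em : e *: m = 0.
  apply: inj_u; rewrite (linmap0 lin_u) -(img0 N _ bil_e) big_map /=.
  rewrite /m scaler_sumr linmap_sum //; apply: eq_bigr => p _.
  by rewrite scalerA linmapZ // mulrC.
by rewrite -{1}ef (bilin_onZl f0 bil_b) // -(bilin_onZr bil_b _ _ ff) em (bilin_on0r bil_b ff).
Qed.

(* Flatness for the inclusion yR ~ R/Ann(y) -> R kills f (x) 1, whose image
   f (x) y = fy (x) 1 vanishes; evaluating at the bilinear map to
   R/(Ann(f) + Ann(y)) decomposes 1, up to corrections, as a + c with fa = 0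
   and yc = 0. *)
Lemma pf_ann_pure : pf_ring R ->
  forall f y : R, f * y = 0 -> exists2 h, f * h = 0 & y * h = y.
Proof.
move=> pf f y fy; pose Jy := ann_ideal y.
have yrep x : y * qrep Jy x = y * x.
  by move: (qrepP Jy x) => /eqP; rewrite mulrBr subr_eq0 => /eqP.
pose u (q : quot_mod Jy) : R^o := val q * y.
have uE x : u (qproj Jy x) = x * y by rewrite /u /= mulrC yrep mulrC.
have lin_u : is_linear_map u.
  by move=> r; do 2!elim/quot_mod_ind=> ?; rewrite qprojZ qprojD !uE mulrDl -mulrA.
have inj_u : injective u.
  do 2!elim/quot_mod_ind=> ?; rewrite !uE => eq_xy; apply/qproj_eqP.
  by rewrite /= mulrBr ![y * _]mulrC eq_xy subrr.
pose K := ideal_add (ann_ideal f) Jy.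
pose b x (q : quot_mod Jy) : quot_mod K := qproj K (pcoef f x * val q).
have bil_b : bilin_on (principal_ideal f) b.
  split=> [r x z q fx fz | r x q q' fx].
  - rewrite /b qprojZ qprojD; apply/qproj_eqP/ideal_addl => /=.
    by rewrite -[RHS](mul0r (sval q)) -(pcoefMD r fx fz); ring.
  - elim/quot_mod_ind: q => a; elim/quot_mod_ind: q' => c.
    rewrite /b qprojZ qprojD /= qprojZ qprojD; apply/qproj_eqP/ideal_addr => /=.
    transitivity (pcoef f x *
      (y * qrep Jy (r * a + c) - r * (y * qrep Jy a) - y * qrep Jy c)); first ring.
    by rewrite !yrep; ring.
have sI p : p \in [:: (f, qproj Jy 1)] -> principal_ideal f p.1.
  by rewrite inE => /eqP -> /=; apply: principal_ideal_id.
have img0 : tensor_zero (principal_ideal f) [seq (p.1, u p.2) | p <- [:: (f, qproj Jy 1)]].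
  move=> P b' bil_b'; rewrite big_map big_seq1 /= uE mul1r.
  rewrite (_ : y = y *: (1 : R^o)); last by rewrite /GRing.scale /= mulr1.
  rewrite (bilin_onZr bil_b' _ _ (principal_ideal_id f)).
  rewrite -(bilin_onZl (principal_ideal0 f) bil_b' _ _ (principal_ideal_id f)).
  by rewrite mulrC fy (bilin_on0l (principal_ideal0 f) bil_b').
move: (pf f _ _ u lin_u inj_u _ sI img0 _ b bil_b); rewrite big_seq1 /b /= -qproj0.
move=> /qproj_eqP [a [c [/esym E fa yc]]].
set P := pcoef f f in E; set Q := qrep Jy 1 in E.
exists (a + (1 - P) * Q).
  rewrite mulrDr fa add0r mulrA mulrBr mulr1 [f * P]mulrC pcoefK ?subrr ?mul0r //.
  exact: principal_ideal_id.
have -> : a = P * Q - c by rewrite -[a](addrK c) E subr0.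
transitivity (y * Q - y * c); first ring.
by rewrite yc subr0 /Q yrep mulr1.
Qed.
End Flatness.

Section Localization.
Variable R : comPzRingType.

Lemma nonzerodiv1 : nonzerodiv (1 : R).
Proof. by move=> g; rewrite mul1r. Qed.

Lemma nonzerodiv_multiplicative : Defs.multiplicative (@nonzerodiv R).
Proof. by split=> [|s t nzs nzt g]; [apply: nonzerodiv1 | rewrite -mulrA => /nzs /nzt]. Qed.

Lemma total_quotient_regular : loc_absolutely_flat (@nonzerodiv R) ->
  forall f : R, exists b t, nonzerodiv t /\ f * f * b = f * t.
Proof.
move=> laf f; have [b [t [nzt [u [nzu E]]]]] := laf f 1 nonzerodiv1.
exists b, t; split=> //; move/nzu/eqP: E.
by rewrite !mulr1 !mul1r subr_eq0 => /eqP.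
Qed.

Lemma support_idempotent_loc_abs_flat :
  has_support_idempotents R -> loc_absolutely_flat (@nonzerodiv R).
Proof.
move=> supp a s nzs; have [e [ee ea ann_e]] := supp a.
exists (s * e), (a + 1 - e); split.
  have et : e * (a + 1 - e) = a by rewrite mulrBr mulrDr ee ea mulr1 addrK.
  move=> x tx; have ax : a * x = 0 by rewrite -et -mulrA tx mulr0.
  by move: tx; rewrite mulrBl mulrDl ax ann_e // add0r mul1r subr0.
exists 1; split; first exact: nonzerodiv1.
transitivity (s * s * (a * (e * a) - a * a - a + e * a)); first ring.
by rewrite ea; ring.
Qed.

Lemma support_idempotent_lifts : has_support_idempotents R ->
  forall S : R -> Prop, Defs.multiplicative S -> lifts_idempotents S.
Proof.
move=> supp S [_ mulS] a s Ss [u [Su E]].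
have [e [ee eusa ann_e]] := supp (u * s * a).
have ea : e * a = e * s.
  apply/eqP; rewrite -subr_eq0 -mulrBr; apply/eqP/ann_e.
  by rewrite -[RHS]E; ring.
exists e; split=> //; exists (u * s); split; first exact: mulS.
transitivity (e * (u * s * a) - u * s * a); first by rewrite -ea; ring.
by rewrite eusa subrr.
Qed.

Lemma pf_support_idempotent : pf_ring R -> loc_absolutely_flat (@nonzerodiv R) ->
  has_support_idempotents R.
Proof.
move=> pf laf f; have [b [t [nzt E]]] := total_quotient_regular laf f.
have [h fh yh] : exists2 h, f * h = 0 & (t - f * b) * h = t - f * b.
  by apply: pf_ann_pure => //; rewrite mulrBr mulrA E subrr.
have th : t * h = t - f * b.
  by rewrite -[RHS]yh mulrBl -mulrA [b * h]mulrC mulrA fh mul0r subr0.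
have hh : h * h = h.
  apply/eqP; rewrite eq_sym -subr_eq0; apply/eqP/nzt.
  by rewrite mulrBr mulrA th yh subrr.
exists (1 - h); split.
- by rewrite mulrBr mulr1 mulrBl mul1r hh subrr subr0.
- by rewrite mulrBl mul1r mulrC fh subr0.
- move=> x fx; apply: nzt.
  by rewrite mulrA mulrBr mulr1 th opprB addrC subrK mulrC mulrA [x * f]mulrC fx mul0r.
Qed.

Lemma lifts_support_idempotent : loc_absolutely_flat (@nonzerodiv R) ->
  lifts_idempotents (@nonzerodiv R) -> has_support_idempotents R.
Proof.
move=> laf lift f; have [b [t [nzt E]]] := total_quotient_regular laf f.
have idem_fbt : frac_eq (@nonzerodiv R) (f * b * (f * b)) (t * t) (f * b) t.
  exists 1; split; first exact: nonzerodiv1.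
  by transitivity (b * t * (f * f * b - f * t)); [ring | rewrite E subrr mulr0].
have [e [ee [v [nzv /nzv]]]] := lift _ _ nzt idem_fbt.
rewrite mulr1 => /eqP; rewrite subr_eq0 => /eqP et.
exists e; split=> //.
  apply/eqP; rewrite -subr_eq0; apply/eqP/nzt.
  by transitivity (e * t * f - f * t); [ring | rewrite et -E; ring].
move=> y fy; apply: nzt.
by rewrite mulrA (mulrC t) et -mulrA mulrCA fy mulr0.
Qed.

End Localization.

Theorem theorem2p1 (R : comPzRingType) :
  (pp_ring R <-> pf_ring R /\ loc_absolutely_flat (@nonzerodiv R)) /\
  (pp_ring R <-> loc_absolutely_flat (@nonzerodiv R) /\
      (forall S : R -> Prop, Defs.multiplicative S -> lifts_idempotents S)) /\
  (pp_ring R <-> loc_absolutely_flat (@nonzerodiv R) /\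
      lifts_idempotents (@nonzerodiv R)).
Proof.
have nzd_mult := @nonzerodiv_multiplicative R.
rewrite pp_ringP; split; [|split]; split.
- by move=> supp; split; [apply: support_idempotent_pf | apply: support_idempotent_loc_abs_flat].
- by case; apply: pf_support_idempotent.
- by move=> supp; split; [apply: support_idempotent_loc_abs_flat | apply: support_idempotent_lifts].
- by case=> laf lift; apply: lifts_support_idempotent laf (lift _ nzd_mult).
- move=> supp; split; first exact: support_idempotent_loc_abs_flat.
  exact: support_idempotent_lifts supp _ nzd_mult.
- by case; apply: lifts_support_idempotent.
Qed.
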